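(* Under the standing assumptions below, for every $k\ge1$, with $\widetilde{X'_k}(1)=-\sum_{j=1}^{k}a_jX_{k+1-j}$, $$\mathbb{E}\big[(X_{k+1}-\widetilde{X'_k}(1))^2\big]=\sigma_\varepsilon^2+\sum_{j=k+1}^{\infty}\sum_{l=k+1}^{\infty}a_ja_l\,\sigma(l-j),$$ where the double series converges absolutely.
   Context: Standing assumptions. Let $(X_n)_{n\in\mathbb Z}$ be a real, zero-mean, weakly stationary process in $L^2$ with autocovariance function $\sigma(j)=\mathbb E[X_nX_{n+j}]$, satisfying $\sum_{j\in\mathbb Z}|\sigma(j)|=\infty$. Assume $X_n=\sum_{j\ge0}b_j\varepsilon_{n-j}$ (convergence in $L^2$). Here $(\varepsilon_n)_{n\in\mathbb Z}$ is a sequence of uncorrelated random variables with mean $0$ and variance $\sigma_\varepsilon^2>0$, and $b_0=1$, $\sum_j b_j^2<\infty$. Assume also $\varepsilon_n=\sum_{j\ge0}a_jX_{n-j}$ with $a_0=1$ and $\sum_j|a_j|<\infty$. The power series $A(z)=\sum_{j\ge0}a_jz^j$ and $B(z)=\sum_{j\ge0}b_jz^j$ satisfy $A(z)B(z)=1$ for $|z|\le1$. Fix $d\in(0,1/2)$. Assume that for every $\delta>0$ there exist constants $C_1,C_2$ (depending on $\delta$) such that $|a_j|\le C_1j^{-d-1+\delta}$ and $|b_j|\le C_2j^{d-1+\delta}$ for all $j\ge1$. *)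

From Stdlib Require Export Reals ZArith.
Open Scope R_scope.

(* Second-order (L^2) setting.  A real vector space of random variables     *)
(* with the (semi-)inner product (X,Y) |-> E[XY].  The space of all square-  *)
(* integrable random variables on a probability space is an instance.       *)
Record L2Space := {
  rv :> Type;
  vzero : rv;
  vadd : rv -> rv -> rv;
  vscal : R -> rv -> rv;
  E2 : rv -> rv -> R;
  vadd_assoc : forall x y z, vadd x (vadd y z) = vadd (vadd x y) z;
  vadd_comm : forall x y, vadd x y = vadd y x;
  vadd_0 : forall x, vadd vzero x = x;
  vadd_opp : forall x, vadd x (vscal (-1) x) = vzero;
  vscal_1 : forall x, vscal 1 x = x;
  vscal_assoc : forall a b x, vscal a (vscal b x) = vscal (a * b) x;
  vscal_addr : forall a x y, vscal a (vadd x y) = vadd (vscal a x) (vscal a y);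
  vscal_addl : forall a b x, vscal (a + b) x = vadd (vscal a x) (vscal b x);
  E2_sym : forall x y, E2 x y = E2 y x;
  E2_addl : forall x y z, E2 (vadd x y) z = E2 x z + E2 y z;
  E2_scall : forall a x y, E2 (vscal a x) y = a * E2 x y;
  E2_pos : forall x, 0 <= E2 x x
}.

Arguments vzero {_}. Arguments vadd {_}. Arguments vscal {_}. Arguments E2 {_}.

Definition vsub {V : L2Space} (x y : V) : V := vadd x (vscal (-1) y).
Definition vopp {V : L2Space} (x : V) : V := vscal (-1) x.

Fixpoint vsum {V : L2Space} (f : nat -> V) (n : nat) : V :=
  match n with
  | O => vzero
  | S m => vadd (vsum f m) (f m)
  end.

Definition L2_series {V : L2Space} (f : nat -> V) (x : V) : Prop :=
  Un_cv (fun n => E2 (vsub x (vsum f n)) (vsub x (vsum f n))) 0.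

(* sum_{j in Z} |s j| = infinity: the symmetric partial sums are unbounded *)
Definition Z_abs_sum_infinite (s : Z -> R) : Prop :=
  forall M : R, exists N : nat,
    sum_f_R0 (fun i => Rabs (s (Z.of_nat i - Z.of_nat N)%Z)) (2 * N) > M.

Definition Cx := (R * R)%type.
Definition Cmul (z w : Cx) : Cx :=
  (fst z * fst w - snd z * snd w, fst z * snd w + snd z * fst w).
Fixpoint Cpow (z : Cx) (n : nat) : Cx :=
  match n with O => (1, 0) | S m => Cmul (Cpow z m) z end.
Definition Cmod (z : Cx) : R := sqrt (fst z ^ 2 + snd z ^ 2).

Definition pseries_cv (c : nat -> R) (z : Cx) (l : Cx) : Prop :=
  Un_cv (fun n => sum_f_R0 (fun j => c j * fst (Cpow z j)) n) (fst l) /\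
  Un_cv (fun n => sum_f_R0 (fun j => c j * snd (Cpow z j)) n) (snd l).

(* Write eps_{k+1} = sum_j a_j X_{k+1-j} (mean-square convergent) and split
   the filter as P + Q_N + r_N, where P = sum_{j<=k} a_j X_{k+1-j} is exactly
   the prediction error X_{k+1} - Xpred, Q_N = sum_{k<j<=k+1+N} a_j X_{k+1-j}
   and r_N -> 0 in mean square.  The innovation eps_{k+1} is orthogonal to
   the past of the process (by the MA(infinity) representation), hence to
   every Q_N, so Pythagoras gives in the limit
     E[P^2] = E[eps_{k+1}^2] + lim E[Q_N^2] = s2 + lim_N sum_{i,m<=N} term i m.
   Since |term i m| <= sigma(0) |a_{k+1+i}| |a_{k+1+m}| and a is absolutely
   summable, the double series converges absolutely and its iterated sum
   equals the limit of the square partial sums. *)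

From Stdlib Require Import Reals Lra Lia.
Open Scope R_scope.

Notation series u := (fun n => sum_f_R0 u n).

Lemma Un_cv_const (x : R) : Un_cv (fun _ => x) x.
Proof.
  intros e He; exists O; intros n _.
  unfold Rdist; rewrite Rminus_diag, Rabs_R0; lra.
Qed.

Lemma Un_cv_squeeze_0 (v w : nat -> R) :
  (forall n, Rabs (v n) <= w n) -> Un_cv w 0 -> Un_cv v 0.
Proof.
  intros Hvw Hw e He; destruct (Hw e He) as [N HN]; exists N; intros n Hn.
  specialize (HN n Hn); specialize (Hvw n); unfold Rdist in *; rewrite Rminus_0_r in *.
  eapply Rle_lt_trans; [exact Hvw|]; eapply Rle_lt_trans; [apply Rle_abs|exact HN].
Qed.

Lemma sum_scal_l (c : R) (f : nat -> R) (N : nat) :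
  sum_f_R0 (fun i => c * f i) N = c * sum_f_R0 f N.
Proof. rewrite scal_sum; apply sum_eq; intros; ring. Qed.

Lemma series_scal (c : R) (w : nat -> R) (W : R) :
  Un_cv (series w) W -> Un_cv (series (fun i => c * w i)) (c * W).
Proof.
  intros Hw. apply (Un_cv_ext (fun n => c * sum_f_R0 w n)).
  - intros n; symmetry; apply sum_scal_l.
  - exact (CV_mult _ _ _ _ (Un_cv_const c) Hw).
Qed.

Lemma series_tail (f : nat -> R) (l : R) (m : nat) :
  Un_cv (series f) l ->
  Un_cv (series (fun i => f (m + 1 + i)%nat)) (l - sum_f_R0 f m).
Proof.
  intros Hf.
  apply (Un_cv_ext (fun n => sum_f_R0 f (n + S m) - sum_f_R0 f m)).
  - intros n; rewrite (tech2 f m (n + S m)) by lia.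
    replace (n + S m - S m)%nat with n by lia.
    assert (E : sum_f_R0 (fun i => f (S m + i)%nat) n = sum_f_R0 (fun i => f (m + 1 + i)%nat) n)
      by (apply sum_eq; intros; f_equal; lia).
    lra.
  - apply CV_minus; [apply CV_shift', Hf|apply Un_cv_const].
Qed.

Lemma series_comparison (g h : nat -> R) (L : R) :
  (forall i, Rabs (g i) <= h i) -> Un_cv (series h) L -> {l | Un_cv (series g) l}.
Proof.
  intros Hgh Hh. apply cv_cauchy_2, cauchy_abs, cv_cauchy_1.
  apply (Rseries_CV_comp _ h); [|exists L; exact Hh].
  intros i; split; [apply Rabs_pos|apply Hgh].
Qed.

Lemma dominated_series (g w : nat -> R) (c W : R) :
  (forall i, Rabs (g i) <= c * w i) -> Un_cv (series w) W ->
  {l | Un_cv (series g) l /\ Rabs l <= c * W /\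
       forall N, Rabs (l - sum_f_R0 g N) <= c * (W - sum_f_R0 w N)}.
Proof.
  intros Hg Hw.
  assert (Hcw := series_scal c w W Hw).
  destruct (series_comparison g _ _ Hg Hcw) as [l Hl].
  exists l; split; [exact Hl|split].
  - exact (sum_cv_maj _ (fun i _ => g i) 0 l _ Hl Hcw Hg).
  - intros N; rewrite Rmult_minus_distr_l, <- sum_scal_l.
    exact (sum_maj1 (fun i _ => g i) _ 0 l _ N Hl Hcw Hg).
Qed.

Section DoubleSeries.
Variables (term : nat -> nat -> R) (w : nat -> R) (K W : R).
Hypothesis w_summable : Un_cv (series w) W.
Hypothesis term_dominated : forall i m, Rabs (term i m) <= K * w i * w m.

Lemma double_series_abs :
  exists T : nat -> R, (forall i, infinite_sum (fun m => Rabs (term i m)) (T i)) /\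
                       exists t, infinite_sum T t.
Proof.
  assert (row : forall i, {T | Un_cv (series (fun m => Rabs (term i m))) T /\
                              Rabs T <= K * W * w i}).
  { intros i.
    assert (Hdom : forall m, Rabs (Rabs (term i m)) <= K * w i * w m)
      by (intros m; rewrite Rabs_Rabsolu; apply term_dominated).
    destruct (dominated_series _ _ _ _ Hdom w_summable) as [T [HT [HTb _]]].
    exists T; split; [exact HT|lra]. }
  exists (fun i => proj1_sig (row i)); split.
  - intros i; exact (proj1 (proj2_sig (row i))).
  - destruct (series_comparison _ _ _ (fun i => proj2 (proj2_sig (row i)))
                (series_scal (K * W) w W w_summable)) as [t Ht].
    exists t; exact Ht.
Qed.

Lemma double_series_square :
  exists (S : nat -> R) (D : R),
    (forall i, infinite_sum (term i) (S i)) /\ infinite_sum S D /\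
    Un_cv (fun N => sum_f_R0 (fun i => sum_f_R0 (term i) N) N) D.
Proof.
  assert (row : forall i, {l | Un_cv (series (term i)) l /\ Rabs l <= K * w i * W /\
            forall N, Rabs (l - sum_f_R0 (term i) N) <= K * w i * (W - sum_f_R0 w N)})
    by (intros i; exact (dominated_series _ _ _ _ (term_dominated i) w_summable)).
  set (S := fun i => proj1_sig (row i)).
  assert (HS : forall i, Un_cv (series (term i)) (S i) /\ Rabs (S i) <= K * W * w i /\
            forall N, Rabs (S i - sum_f_R0 (term i) N) <= K * w i * (W - sum_f_R0 w N)).
  { intros i; destruct (proj2_sig (row i)) as [H1 [H2 H3]]; repeat split; auto.
    unfold S; lra. }
  destruct (dominated_series S w (K * W) W (fun i => proj1 (proj2 (HS i))) w_summable)
    as [D [HD _]].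
  exists S, D; split; [intros i; exact (proj1 (HS i))|split; [exact HD|]].
  set (s := series w).
  assert (gap : forall N, Rabs (sum_f_R0 S N - sum_f_R0 (fun i => sum_f_R0 (term i) N) N)
                          <= K * (W - s N) * s N).
  { intros N. rewrite <- minus_sum.
    eapply Rle_trans; [apply Rabs_triang_gen|].
    eapply Rle_trans; [apply sum_Rle; intros i _; apply (proj2 (proj2 (HS i)))|].
    right; unfold s; cbv beta; rewrite <- sum_scal_l; apply sum_eq; intros; ring. }
  assert (gap0 : Un_cv (fun N => K * (W - s N) * s N) 0).
  { replace 0 with (K * (W - W) * W) by ring.
    apply CV_mult; [apply CV_mult; [apply Un_cv_const|]|exact w_summable].
    apply CV_minus; [apply Un_cv_const|exact w_summable]. }
  apply (Un_cv_ext (fun N => sum_f_R0 S N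
           - (sum_f_R0 S N - sum_f_R0 (fun i => sum_f_R0 (term i) N) N))).
  { intros N; ring. }
  replace D with (D - 0) by ring.
  exact (CV_minus _ _ _ _ HD (Un_cv_squeeze_0 _ _ gap gap0)).
Qed.

End DoubleSeries.

Arguments E2_sym {_}. Arguments E2_addl {_}. Arguments E2_scall {_}. Arguments E2_pos {_}.
Arguments vadd_assoc {_}. Arguments vadd_comm {_}. Arguments vadd_0 {_}.
Arguments vadd_opp {_}. Arguments vscal_1 {_}. Arguments vscal_assoc {_}.
Arguments vscal_addl {_}.

Section L2Geometry.
Variable V : L2Space.

Lemma vscal_0 (x : V) : vscal 0 x = vzero.
Proof. replace 0 with (1 + -1) by ring. rewrite vscal_addl, vscal_1. apply vadd_opp. Qed.

Lemma E2_0l (y : V) : E2 vzero y = 0.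
Proof. rewrite <- (vscal_0 vzero), E2_scall. ring. Qed.

Lemma E2_addr (x y z : V) : E2 z (vadd x y) = E2 z x + E2 z y.
Proof. rewrite E2_sym, E2_addl, (E2_sym x), (E2_sym y). reflexivity. Qed.

Lemma E2_scalr (c : R) (x y : V) : E2 y (vscal c x) = c * E2 y x.
Proof. rewrite E2_sym, E2_scall, E2_sym. reflexivity. Qed.

Lemma E2_subl (x y z : V) : E2 (vsub x y) z = E2 x z - E2 y z.
Proof. unfold vsub. rewrite E2_addl, E2_scall. ring. Qed.

Lemma E2_subr (x y z : V) : E2 z (vsub x y) = E2 z x - E2 z y.
Proof. rewrite E2_sym, E2_subl, !(E2_sym z). reflexivity. Qed.

Lemma E2_vsuml (g : nat -> V) (n : nat) (y : V) :
  E2 (vsum g (S n)) y = sum_f_R0 (fun i => E2 (g i) y) n.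
Proof.
  induction n as [|n IH].
  - simpl; rewrite E2_addl, E2_0l; ring.
  - change (vsum g (S (S n))) with (vadd (vsum g (S n)) (g (S n))).
    rewrite E2_addl, IH; reflexivity.
Qed.

Lemma E2_vsumr (g : nat -> V) (n : nat) (y : V) :
  E2 y (vsum g (S n)) = sum_f_R0 (fun i => E2 y (g i)) n.
Proof. rewrite E2_sym, E2_vsuml. apply sum_eq; intros; apply E2_sym. Qed.

Lemma vsum_ext (f g : nat -> V) (n : nat) : (forall i, f i = g i) -> vsum f n = vsum g n.
Proof. intros Hfg; induction n as [|n IH]; simpl; [|rewrite IH, Hfg]; reflexivity. Qed.

Lemma vsum_split (f : nat -> V) (m n : nat) :
  vsum f (m + n) = vadd (vsum f m) (vsum (fun i => f (m + i)%nat) n).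
Proof.
  induction n as [|n IH]; simpl.
  - rewrite Nat.add_0_r, vadd_comm, vadd_0; reflexivity.
  - rewrite Nat.add_succ_r; simpl; rewrite IH, vadd_assoc; reflexivity.
Qed.

(* Weighted Cauchy-Schwarz inequality, from positivity of
   E2 (x + s y) (x + s y) for s = t and s = -t. *)
Lemma E2_abs_bound (x y : V) (t : R) :
  0 < t -> 2 * t * Rabs (E2 x y) <= E2 x x + t * t * E2 y y.
Proof.
  intros Ht.
  assert (pos : forall s, 0 <= E2 x x + 2 * s * E2 x y + s * s * E2 y y).
  { intros s. assert (H := E2_pos (vadd x (vscal s y))).
    rewrite E2_addl, !E2_addr, !E2_scall, !E2_scalr, (E2_sym y x) in H. lra. }
  assert (H1 := pos t); assert (H2 := pos (- t)).
  unfold Rabs; destruct (Rcase_abs _); nra.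
Qed.

Lemma E2_vanishing (e : nat -> V) (y : V) :
  Un_cv (fun n => E2 (e n) (e n)) 0 -> Un_cv (fun n => E2 (e n) y) 0.
Proof.
  intros He eps Heps.
  assert (Hy := E2_pos y).
  set (t := eps / (E2 y y + 1)).
  assert (Ht : 0 < t) by (unfold t; apply Rdiv_lt_0_compat; lra).
  assert (Hty : t * E2 y y < eps).
  { unfold t; apply (Rmult_lt_reg_r (E2 y y + 1)); [lra|]; field_simplify; nra. }
  destruct (He (eps * t) ltac:(nra)) as [N HN]; exists N; intros n Hn.
  specialize (HN n Hn); unfold Rdist in *; rewrite Rminus_0_r in *.
  assert (Hp := E2_pos (e n)); rewrite Rabs_right in HN by lra.
  assert (C := E2_abs_bound (e n) y t Ht).
  assert (2 * t * Rabs (E2 (e n) y) < 2 * t * eps) by nra.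
  nra.
Qed.

Lemma L2_series_orthogonal (f : nat -> V) (x y : V) :
  L2_series f x -> (forall j, E2 y (f j) = 0) -> E2 y x = 0.
Proof.
  intros Hx Hy.
  assert (Hlim := E2_vanishing _ y Hx); simpl in Hlim.
  assert (Hconst : forall N, E2 (vsub x (vsum f N)) y = E2 y x).
  { intros [|N].
    - rewrite E2_subl, E2_0l, E2_sym; ring.
    - rewrite E2_subl, E2_vsuml, sum_eq_R0, E2_sym; [ring|].
      intros i _; rewrite E2_sym; apply Hy. }
  apply (UL_sequence (fun N => E2 (vsub x (vsum f N)) y)); [|exact Hlim].
  apply (Un_cv_ext (fun _ => E2 y x)); [intros; symmetry; apply Hconst|apply Un_cv_const].
Qed.

Lemma L2_series_remainder (f : nat -> V) (x : V) (m : nat) :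
  L2_series f x ->
  Un_cv (fun N => E2 (vsub x (vadd (vsum f m) (vsum (fun i => f (m + i)%nat) (S N))))
                     (vsub x (vadd (vsum f m) (vsum (fun i => f (m + i)%nat) (S N))))) 0.
Proof.
  intros Hx.
  apply (Un_cv_ext (fun N => E2 (vsub x (vsum f (N + S m))) (vsub x (vsum f (N + S m))))).
  - intros N; replace (N + S m)%nat with (m + S N)%nat by lia.
    rewrite vsum_split; reflexivity.
  - exact (CV_shift' _ (S m) 0 Hx).
Qed.

Lemma orthogonal_remainder_limit (u p : V) (q : nat -> V) (D : R) :
  (forall N, E2 u (q N) = 0) ->
  Un_cv (fun N => E2 (q N) (q N)) D ->
  Un_cv (fun N => E2 (vsub u (vadd p (q N))) (vsub u (vadd p (q N)))) 0 ->
  E2 p p = E2 u u + D.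
Proof.
  intros Horth Hq Hr.
  set (r := fun N => vsub u (vadd p (q N))) in Hr.
  (* p + r N = u - q N, expanded through the inner product *)
  assert (expand : forall N, E2 u u + E2 (q N) (q N)
                             = E2 (r N) (r N) + 2 * E2 (r N) p + E2 p p).
  { intros N; unfold r.
    rewrite !E2_subl, !E2_subr, !E2_addl, !E2_addr.
    rewrite (E2_sym (q N) p), (E2_sym (q N) u), (E2_sym p u), Horth; ring. }
  apply (UL_sequence (fun N => E2 u u + E2 (q N) (q N))).
  - apply (Un_cv_ext (fun N => E2 (r N) (r N) + 2 * E2 (r N) p + E2 p p));
      [intros; symmetry; apply expand|].
    assert (H := CV_plus _ _ _ _ (CV_plus _ _ _ _ Hr
                   (CV_mult _ _ _ _ (Un_cv_const 2) (E2_vanishing r p Hr)))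
                   (Un_cv_const (E2 p p))).
    replace (0 + 2 * 0 + E2 p p) with (E2 p p) in H by ring; exact H.
  - apply CV_plus; [apply Un_cv_const|exact Hq].
Qed.

End L2Geometry.

Section StationaryProcess.
Variables (V : L2Space) (X eps : Z -> V) (sigma : Z -> R) (b : nat -> R).
Hypothesis Hstat : forall n j : Z, E2 (X n) (X (n + j)%Z) = sigma j.
Hypothesis Heps_unc : forall n m : Z, n <> m -> E2 (eps n) (eps m) = 0.
Hypothesis HMA :
  forall n : Z, L2_series (fun j => vscal (b j) (eps (n - Z.of_nat j)%Z)) (X n).

Lemma autocovariance (p q : Z) : E2 (X p) (X q) = sigma (p - q)%Z.
Proof. rewrite E2_sym, <- (Hstat q (p - q)). do 3 f_equal; ring. Qed.

Lemma autocovariance_bound (j : Z) : Rabs (sigma j) <= sigma 0%Z.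
Proof.
  assert (H := E2_abs_bound V (X j) (X 0%Z) 1 Rlt_0_1).
  rewrite !autocovariance, Z.sub_0_r, !Z.sub_diag in H. lra.
Qed.

(* The form in which the bound dominates the double series of the theorem. *)
Lemma weighted_autocovariance_bound (x y : R) (j : Z) :
  Rabs (x * y * sigma j) <= sigma 0%Z * Rabs x * Rabs y.
Proof.
  rewrite !Rabs_mult.
  apply (Rle_trans _ (Rabs x * Rabs y * sigma 0%Z)); [|right; ring].
  apply Rmult_le_compat_l; [apply Rmult_le_pos; apply Rabs_pos|apply autocovariance_bound].
Qed.

Lemma filter_second_moment (c : nat -> R) (t : nat -> Z) (N : nat) :
  E2 (vsum (fun i => vscal (c i) (X (t i))) (S N))
     (vsum (fun i => vscal (c i) (X (t i))) (S N))
  = sum_f_R0 (fun i => sum_f_R0 (fun m => c i * c m * sigma (t i - t m)%Z) N) N.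
Proof.
  rewrite E2_vsuml; apply sum_eq; intros i _.
  rewrite E2_vsumr; apply sum_eq; intros m _.
  rewrite E2_scall, E2_scalr, autocovariance; ring.
Qed.

(* In a causal MA(infinity) representation with uncorrelated innovations,
   each innovation is uncorrelated with the past of the process. *)
Lemma innovation_orthogonal_past (n m : Z) : (m < n)%Z -> E2 (eps n) (X m) = 0.
Proof.
  intros Hmn. apply (L2_series_orthogonal V _ _ _ (HMA m)).
  intros j; rewrite E2_scalr, Heps_unc; [ring|lia].
Qed.

Lemma innovation_orthogonal_filter (c : nat -> R) (t : nat -> Z) (n : Z) (N : nat) :
  (forall i, (t i < n)%Z) -> E2 (eps n) (vsum (fun i => vscal (c i) (X (t i))) (S N)) = 0.
Proof.
  intros Ht; rewrite E2_vsumr; apply sum_eq_R0; intros i _.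
  rewrite E2_scalr, innovation_orthogonal_past; [ring|apply Ht].
Qed.

Lemma prediction_error_filter (a : nat -> R) (k : nat) : a 0%nat = 1 ->
  vsub (X (Z.of_nat k + 1)%Z)
    (vopp (vsum (fun i => vscal (a (i + 1)%nat) (X (Z.of_nat k + 1 - Z.of_nat (i + 1))%Z)) k))
  = vsum (fun j => vscal (a j) (X (Z.of_nat k + 1 - Z.of_nat j)%Z)) (k + 1).
Proof.
  intros Ha0. unfold vsub, vopp.
  rewrite vscal_assoc; replace (-1 * -1) with 1 by ring; rewrite vscal_1.
  rewrite Nat.add_comm, vsum_split; simpl (vsum _ 1); rewrite vadd_0, Ha0, vscal_1.
  f_equal; [f_equal; simpl; ring|].
  apply vsum_ext; intros i; rewrite (Nat.add_comm 1 i); reflexivity.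
Qed.

End StationaryProcess.

Theorem mainTheorem3
  (V : L2Space) (X eps : Z -> V) (sigma : Z -> R) (s2 : R)
  (a b : nat -> R) (d : R)
  (* weak stationarity, autocovariance sigma(j) = E[X_n X_{n+j}] *)
  (Hstat : forall n j : Z, E2 (X n) (X (n + j)%Z) = sigma j)
  (Hlong : Z_abs_sum_infinite sigma)
  (* innovations: uncorrelated, variance s2 > 0 *)
  (Hs2 : 0 < s2)
  (Heps_var : forall n : Z, E2 (eps n) (eps n) = s2)
  (Heps_unc : forall n m : Z, n <> m -> E2 (eps n) (eps m) = 0)
  (* MA(infinity) representation *)
  (Hb0 : b 0%nat = 1)
  (Hb2 : exists l, infinite_sum (fun j => b j ^ 2) l)
  (HMA : forall n : Z, L2_series (fun j => vscal (b j) (eps (n - Z.of_nat j)%Z)) (X n))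
  (* AR(infinity) representation *)
  (Ha0 : a 0%nat = 1)
  (Ha1 : exists l, infinite_sum (fun j => Rabs (a j)) l)
  (HAR : forall n : Z, L2_series (fun j => vscal (a j) (X (n - Z.of_nat j)%Z)) (eps n))
  (* A(z) B(z) = 1 on the closed unit disc (wherever both series converge) *)
  (HAB : forall z la lb, Cmod z <= 1 -> pseries_cv a z la -> pseries_cv b z lb ->
           Cmul la lb = (1, 0))
  (* long-memory parameter and coefficient bounds *)
  (Hd : 0 < d < 1 / 2)
  (Hcoef : forall delta, 0 < delta -> exists C1 C2 : R, forall j : nat, (1 <= j)%nat ->
      Rabs (a j) <= C1 * Rpower (INR j) (- d - 1 + delta) /\
      Rabs (b j) <= C2 * Rpower (INR j) (d - 1 + delta)) :
  forall k : nat, (1 <= k)%nat ->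
    let Xpred : V :=
      vopp (vsum (fun i => vscal (a (i + 1)%nat) (X (Z.of_nat k + 1 - Z.of_nat (i + 1))%Z)) k) in
    let err : V := vsub (X (Z.of_nat k + 1)%Z) Xpred in
    let term := fun i m : nat =>
      a (k + 1 + i)%nat * a (k + 1 + m)%nat
        * sigma (Z.of_nat (k + 1 + m) - Z.of_nat (k + 1 + i))%Z in
    (* absolute convergence of the double series sum_{j>k} sum_{l>k} *)
    (exists T : nat -> R, (forall i, infinite_sum (fun m => Rabs (term i m)) (T i))
                          /\ exists t, infinite_sum T t) /\
    (* value *)
    (exists (S : nat -> R) (D : R),
        (forall i, infinite_sum (fun m => term i m) (S i)) /\
        infinite_sum S D /\
        E2 err err = s2 + D).
Proof.
  intros k Hk Xpred err term.
  set (f := fun j : nat => vscal (a j) (X (Z.of_nat k + 1 - Z.of_nat j)%Z)).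
  set (Q := fun N => vsum (fun i => f (k + 1 + i)%nat) (S N)).
  (* the double array is dominated by the summable tail weights |a_{k+1+i}| *)
  destruct Ha1 as [La HLa].
  assert (w_summable := series_tail _ _ k HLa); simpl in w_summable.
  assert (term_dominated : forall i m, Rabs (term i m)
            <= sigma 0%Z * Rabs (a (k + 1 + i)%nat) * Rabs (a (k + 1 + m)%nat))
    by (intros; apply (weighted_autocovariance_bound V X sigma Hstat)).
  split; [exact (double_series_abs term _ _ _ w_summable term_dominated)|].
  destruct (double_series_square term _ _ _ w_summable term_dominated)
    as [rows [D [Hrows [HD HF]]]].
  exists rows, D; split; [exact Hrows|split; [exact HD|]].
  (* the prediction error is the head of the AR filter of eps_{k+1}; the
     rest of that filter is Q N plus a mean-square vanishing remainder *)
  unfold err, Xpred; rewrite (prediction_error_filter V X a k Ha0).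
  rewrite <- (Heps_var (Z.of_nat k + 1)%Z).
  apply (orthogonal_remainder_limit V _ _ Q D).
  - intros N; apply (innovation_orthogonal_filter V X eps b Heps_unc HMA); intros; lia.
  - apply (Un_cv_ext (fun N => sum_f_R0 (fun i => sum_f_R0 (term i) N) N)); [|exact HF].
    intros N; unfold Q, f; rewrite (filter_second_moment V X sigma Hstat).
    apply sum_eq; intros i _; apply sum_eq; intros m _; unfold term.
    do 2 f_equal; ring.
  - exact (L2_series_remainder V _ _ (k + 1) (HAR (Z.of_nat k + 1)%Z)).
Qed.
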